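(* Let $\Psi=\{|\psi_i\rangle\}$ be a family of multi-qubit states that is a universal resource under local projective measurements up to local unitary operations. Then, for any encoding $\{|\mathbf0\rangle,|\mathbf1\rangle\}$, the encoded version $\boldsymbol\Psi$ of the family is an encoded universal resource under LOCC up to logical local unitary operations.
   Context: $\Psi$ is a universal resource under local projective measurements up to local unitary operations if for every $n$ and every $n$-qubit state $|\phi\rangle$ there is $|\psi_i\rangle\in\Psi$ and a (possibly adaptive) sequence of single-qubit projective measurements on all but a fixed set of $n$ qubits of $|\psi_i\rangle$ such that in every branch the unmeasured $n$ qubits are in the state $(U_1\otimes\cdots\otimes U_n)|\phi\rangle$ for some single-qubit unitaries $U_k$ (depending on the branch). An encoding is a fixed pair of orthogonal $m$-qubit states $|\mathbf0\rangle,|\mathbf1\rangle$; the encoded version of an $N$-qubit state $\sum c_{i_1\dots i_N}|i_1\dots i_N\rangle$ is the $mN$-qubit state $\sum c_{i_1\dots i_N}|\mathbf i_1\rangle_{A_1}\cdots|\mathbf i_N\rangle_{A_N}$, where $A_k$ are disjoint blocks of $m$ qubits; $\boldsymbol\Psi$ consists of the encoded versions of the members of $\Psi$. For a one-qubit operator $U=\sum_{a,b}u_{ab}|a\rangle\langle b|$, its logical version is $\mathbf U=\sum_{a,b}u_{ab}|\mathbf a\rangle\langle\mathbf b|$ acting on a block. ''Encoded universal resource under LOCC up to logical local unitary operations'' means: for every $n$ and every $n$-qubit $|\phi\rangle$ there is a member of $\boldsymbol\Psi$ and an LOCC protocol (each physical qubit a separate party) which, exactly and with probability one, leaves a fixed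 set of $n$ blocks in the state $(\mathbf U_1\otimes\cdots\otimes\mathbf U_n)|\boldsymbol\phi\rangle$ for some logical single-qubit unitaries $\mathbf U_k$ (depending on the branch), $|\boldsymbol\phi\rangle$ being the encoded version of $|\phi\rangle$. *)

From HB Require Import structures.
From mathcomp Require Import all_boot all_order all_algebra.
From mathcomp Require Import sesquilinear spectral.
From mathcomp Require Export reals complex.

Set Implicit Arguments.
Unset Strict Implicit.
Unset Printing Implicit Defensive.

Import Order.TTheory GRing.Theory Num.Theory.
Local Open Scope ring_scope.
Local Open Scope sesquilinear_scope.

Section QuantumDefs.
Variable C : numClosedFieldType.

Definition config (Q : finType) := {ffun Q -> 'I_2}.

(* An (unnormalised) pure state vector of the qubits indexed by Q,
   i.e. an element of (C^2)^{\otimes Q}, given by its amplitudes. *)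
Definition qstate (Q : finType) := config Q -> C.

Definition normalized (Q : finType) (v : qstate Q) :=
  \sum_(x : config Q) `|v x| ^+ 2 = 1.

Definition nonzero (Q : finType) (v : qstate Q) := exists x, v x != 0.

Definition upd (Q : finType) (x : config Q) (q : Q) (b : 'I_2) : config Q :=
  [ffun p => if p == q then b else x p].

Definition apply1 (Q : finType) (q : Q) (A : 'M[C]_2) (v : qstate Q) : qstate Q :=
  fun x => \sum_(b < 2) A (x q) b * v (upd x q b).

(* Rank-one projector onto the j-th column of u (the j-th basis vector of the
   orthonormal measurement basis given by the unitary u). *)
Definition proj_col (u : 'M[C]_2) (j : 'I_2) : 'M[C]_2 :=
  \matrix_(a < 2, b < 2) (u a j * (u b j)^*).

(* (Possibly adaptive) sequences of single-qubit projective measurements: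
   a decision tree; at a node, qubit q is measured in the orthonormal basis
   formed by the columns of the unitary u, and the protocol continues
   according to the outcome. *)
Inductive ptree (Q : Type) :=
| PLeaf
| PMeas of Q & 'M[C]_2 & ('I_2 -> ptree Q).

(* "P holds in every branch": P receives the final (unnormalised)
   post-measurement state and the list of measured qubits of the branch. *)
Fixpoint pbranches (Q : finType) (t : ptree Q) (v : qstate Q) (meas : seq Q)
    (P : qstate Q -> seq Q -> Prop) : Prop :=
  match t with
  | PLeaf => P v meas
  | PMeas q u ch =>
      u \is unitarymx /\
      forall j : 'I_2, pbranches (ch j) (apply1 q (proj_col u j) v) (q :: meas) P
  end.

(* LOCC protocols in which every physical qubit is a separate party: a
   decision tree (classical communication = the whole history of outcomes
   determines the next step); at a node, party q applies a local instrument
   with Kraus operators K_0..K_{r-1} (sum_j K_j^dagger K_j = 1) on its qubit. *)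
Inductive ltree (Q : Type) :=
| LLeaf
| LOp (q : Q) (r : nat) (K : 'I_r -> 'M[C]_2) (ch : 'I_r -> ltree Q).

Fixpoint lbranches (Q : finType) (t : ltree Q) (v : qstate Q)
    (P : qstate Q -> Prop) : Prop :=
  match t with
  | LLeaf => P v
  | LOp q r K ch =>
      \sum_(j < r) ((K j)^t* *m K j) = 1%:M /\
      forall j : 'I_r, lbranches (ch j) (apply1 q (K j) v) P
  end.

(* The qubits emb(Qt) of the (nonzero) global state v are in the pure state w
   (up to normalisation/global phase): v = chi (x) w, chi living on the other
   qubits. *)
Definition holds_on (Q Qt : finType) (emb : Qt -> Q) (v : qstate Q)
    (w : qstate Qt) :=
  exists chi : qstate Q,
    (forall x x' : config Q,
        (forall q, (forall k, emb k != q) -> x q = x' q) -> chi x = chi x') /\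
    forall x : config Q, v x = chi x * w [ffun k => x (emb k)].

Definition tensor_apply (n : nat) (U : 'I_n -> 'M[C]_2) (phi : qstate 'I_n)
    : qstate 'I_n :=
  fun y => \sum_(y' : config 'I_n) (\prod_(k < n) U k (y k) (y' k)) * phi y'.

(* The qubits (blocks) indexed by 'I_N * 'I_m: qubit (k, j) is the j-th qubit
   of block A_k. *)
Definition block (N m : nat) (x : config ('I_N * 'I_m)%type) (k : 'I_N) : config 'I_m :=
  [ffun j => x (k, j)].

(* An encoding: a pair of orthonormal m-qubit states |0>, |1> = e 0, e 1. *)
Definition orthonormal_pair (m : nat) (e : 'I_2 -> qstate 'I_m) :=
  forall a b : 'I_2, \sum_(z : config 'I_m) (e a z)^* * e b z = (a == b)%:R.

Definition encode (m : nat) (e : 'I_2 -> qstate 'I_m) (N : nat)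
    (psi : qstate 'I_N) : qstate ('I_N * 'I_m)%type :=
  fun x => \sum_(c : config 'I_N) psi c * \prod_(k < N) e (c k) (block x k).

(* Logical version U = sum_{a,b} u_ab |e_a><e_b| of a one-qubit operator u,
   as a matrix on the m qubits of one block (entry (z, z')). *)
Definition logical_op (m : nat) (e : 'I_2 -> qstate 'I_m) (u : 'M[C]_2)
    (z z' : config 'I_m) : C :=
  \sum_(a < 2) \sum_(b < 2) u a b * e a z * (e b z')^*.

Definition logical_apply (m : nat) (e : 'I_2 -> qstate 'I_m) (n : nat)
    (U : 'I_n -> 'M[C]_2) (w : qstate ('I_n * 'I_m)%type) : qstate ('I_n * 'I_m)%type :=
  fun y => \sum_(y' : config ('I_n * 'I_m)%type)
             (\prod_(k < n) logical_op e (U k) (block y k) (block y' k)) * w y'.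

Definition universal_proj (I : Type) (N : I -> nat)
    (psi : forall i, qstate 'I_(N i)) :=
  forall (n : nat) (phi : qstate 'I_n), normalized phi ->
  exists (i : I) (e : 'I_n -> 'I_(N i)), injective e /\
  exists t : ptree 'I_(N i),
    pbranches t (psi i) [::] (fun v meas =>
      (forall q, q \in meas -> forall k, e k != q) /\
      (forall q, (forall k, e k != q) -> q \in meas) /\
      (* in every (occurring) branch the fixed qubits are in U_1..U_n |phi> *)
      (nonzero v -> exists U : 'I_n -> 'M[C]_2,
          (forall k, U k \is unitarymx) /\ holds_on e v (tensor_apply U phi))).

Definition enc_universal_locc (m : nat) (e : 'I_2 -> qstate 'I_m) (I : Type)
    (N : I -> nat) (psi : forall i, qstate 'I_(N i)) :=
  forall (n : nat) (phi : qstate 'I_n), normalized phi ->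
  exists (i : I) (f : 'I_n -> 'I_(N i)), injective f /\
  exists t : ltree ('I_(N i) * 'I_m)%type,
    lbranches t (encode e (psi i)) (fun v =>
      nonzero v -> exists U : 'I_n -> 'M[C]_2,
        (forall k, U k \is unitarymx) /\
        holds_on (fun p : 'I_n * 'I_m => (f p.1, p.2)) v
                 (logical_apply e U (encode e phi))).

End QuantumDefs.

From mathcomp Require Import all_boot all_order all_algebra.
From mathcomp Require Import reals complex sesquilinear spectral ring.
From Stdlib Require Import FunctionalExtensionality.

Set Implicit Arguments.
Unset Strict Implicit.
Unset Printing Implicit Defensive.
Import Order.TTheory GRing.Theory Num.Theory.
Local Open Scope ring_scope.
Local Open Scope sesquilinear_scope.

(* An LOCC protocol on the encoded resource simulates the measurement tree of the
   unencoded one. Along a branch with post-measurement state v, the encoded state is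
   sum_c v_c (x)_k E_k(c_k), where each block code E_k is a pair of orthogonal states
   of equal norm, equal to e as long as logical qubit k is unmeasured. To measure
   logical qubit q in the basis u, the two code states rotated by u are distinguished
   locally, as in Walgate et al.: the physical qubits of the block are measured one at
   a time by two-outcome instruments projecting onto |0>, keeping the rotated states
   orthogonal. At the end both live on |0...0>, so one of them vanishes and the branch
   realises the corresponding projective outcome, after which the block is re-encoded
   in a fresh orthogonal pair. At a leaf the unmeasured blocks still carry e, so the
   factorisation of v lifts to the encoded states, and encoding commutes with local
   unitaries by orthonormality of e. *)

Section Simulation.
Variable C : numClosedFieldType.

Lemma ord2P (c : 'I_2) : c = ord0 \/ c = ord_max.
Proof. by case: c => [[|[|//]]] lt_c2; [left | right]; apply: val_inj. Qed.

Lemma sum_ord2 (V : nmodType) (F : 'I_2 -> V) : \sum_(j < 2) F j = F ord0 + F ord_max.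
Proof.
by rewrite big_ord_recr big_ord1 /=; congr (F _ + _); apply: val_inj.
Qed.

Lemma sum_delta (R : pzSemiRingType) (T : finType) (a : T) (F : T -> R) :
  \sum_b F b * (a == b)%:R = F a.
Proof.
rewrite (bigD1 a) //= eqxx mulr1 big1 ?addr0 // => b /negbTE nab.
by rewrite eq_sym nab mulr0.
Qed.

Lemma updE (Q : finType) (x : config Q) q b p :
  upd x q b p = if p == q then b else x p.
Proof. by rewrite ffunE. Qed.

Lemma upd_eq (Q : finType) (x : config Q) q b : upd x q b q = b.
Proof. by rewrite updE eqxx. Qed.

Lemma upd_id (Q : finType) (x : config Q) q : upd x q (x q) = x.
Proof. by apply/ffunP=> p; rewrite updE; case: eqP => // ->. Qed.

Lemma upd_upd (Q : finType) (x : config Q) q b b' : upd (upd x q b) q b' = upd x q b'.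
Proof. by apply/ffunP=> p; rewrite !updE; case: eqP. Qed.

Lemma sum_upd (V : nmodType) (Q : finType) q (F : config Q -> 'I_2 -> V) :
  \sum_x \sum_(b < 2) F (upd x q b) (x q) = \sum_x \sum_(b < 2) F x b.
Proof.
rewrite !pair_big /=.
pose h (p : config Q * 'I_2) := (upd p.1 q p.2, p.1 q).
have hK : involutive h by case=> x b; rewrite /h /= upd_upd upd_eq upd_id.
by rewrite [RHS](reindex_inj (inv_inj hK)).
Qed.

Definition dotq (Q : finType) (A B : qstate C Q) := \sum_x (A x)^* * B x.

Lemma apply1_1 (Q : finType) q (v : qstate C Q) : apply1 q 1%:M v = v.
Proof.
apply: functional_extensionality => x; rewrite /apply1.
under eq_bigr do rewrite mxE.
by rewrite (eq_bigr _ (fun b _ => mulrC _ _)) sum_delta upd_id.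
Qed.

Lemma dotq_apply1 (Q : finType) q (K L : 'M[C]_2) (A B : qstate C Q) :
  dotq (apply1 q K A) (apply1 q L B) = dotq A (apply1 q (K^t* *m L) B).
Proof.
pose G (y : config Q) (r : 'I_2) :=
  (K r (y q))^* * (A y)^* * \sum_(b < 2) L r b * B (upd y q b).
transitivity (\sum_x \sum_(b < 2) G (upd x q b) (x q)).
  apply: eq_bigr => x _; rewrite /apply1 rmorph_sum mulr_suml; apply: eq_bigr => b _.
  rewrite /G upd_eq rmorphM /=; congr (_ * _).
  by apply: eq_bigr => b' _; rewrite upd_upd.
rewrite sum_upd; apply: eq_bigr => x _.
rewrite /apply1 /G; under eq_bigr do rewrite mulr_sumr.
rewrite exchange_big mulr_sumr; apply: eq_bigr => b _.
rewrite mxE !mulr_suml mulr_sumr; apply: eq_bigr => r _.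
rewrite !mxE; ring.
Qed.

(* [cross_mx q A B c b] is <A| (|c><b| on qubit q) |B>. *)
Definition cross_mx (Q : finType) (q : Q) (A B : qstate C Q) : 'M[C]_2 :=
  \matrix_(c, b) \sum_x (A x)^* * ((x q == c)%:R * B (upd x q b)).

Lemma dotq_apply1_cross (Q : finType) q (K : 'M[C]_2) (A B : qstate C Q) :
  dotq A (apply1 q K B) = \sum_c \sum_b K c b * cross_mx q A B c b.
Proof.
under [RHS]eq_bigr do under eq_bigr do rewrite mxE mulr_sumr.
under [RHS]eq_bigr do rewrite exchange_big /=.
rewrite exchange_big /=; apply: eq_bigr => x _.
rewrite /apply1 mulr_sumr exchange_big /=; apply: eq_bigr => b _.
rewrite (eq_bigr (fun c => K c b * ((A x)^* * B (upd x q b)) * (x q == c)%:R)).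
  by rewrite sum_delta mulrCA.
by move=> c _; ring.
Qed.

Lemma cross_mx_trace (Q : finType) q (A B : qstate C Q) :
  \tr (cross_mx q A B) = dotq A B.
Proof.
rewrite -[in RHS](apply1_1 q B) dotq_apply1_cross /mxtrace.
apply: eq_bigr => c _; under eq_bigr do rewrite mxE.
by rewrite (eq_bigr _ (fun b _ => mulrC _ _)) sum_delta.
Qed.

Lemma real_quadratic_root (k s : C) : 0 < k -> s^* = s ->
  exists x, x^* = x /\ k * x ^+ 2 - s * x - 1 = 0.
Proof.
move=> k_gt0 sJ.
have disc_ge0 : 0 <= s ^+ 2 + 4%:R * k.
  have s2_ge0 : 0 <= s ^+ 2 by rewrite expr2 -{2}sJ mul_conjC_ge0.
  by rewrite addr_ge0 // mulr_ge0 ?ler0n // ltW.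
pose r := sqrtC (s ^+ 2 + 4%:R * k).
have rJ : r^* = r by apply: geC0_conj; rewrite sqrtC_ge0.
have k0 : k != 0 by rewrite gt_eqF.
have kJ : k^* = k by apply: geC0_conj; rewrite ltW.
exists ((s + r) / (2%:R * k)); split.
  by rewrite fmorph_div rmorphD rmorphM /= sJ rJ kJ rmorph_nat.
have two0 : (2%:R : C) != 0 by rewrite pnatr_eq0.
transitivity ((r ^+ 2 - s ^+ 2 - 4%:R * k) / (4%:R * k)); first by field.
by rewrite sqrtCK addrAC addrK subrr mul0r.
Qed.

Lemma conj_real_direction (u w : C) :
  exists2 g, g != 0 & (g^* * u + g * w)^* = g^* * u + g * w.
Proof.
have [/eqP|dw0] := eqVneq (w - u^*) 0.
  rewrite subr_eq0 => /eqP ->; exists 1; first exact: oner_neq0.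
  by rewrite rmorph1 !mul1r rmorphD /= conjCK addrC.
exists (w - u^*)^*; first by rewrite conjC_eq0.
have -> : (w - u^*)^*^* * u + (w - u^*)^* * w = w * w^* - u * u^*.
  by rewrite conjCK rmorphB /= conjCK; ring.
by rewrite rmorphB !rmorphM /= !conjCK; ring.
Qed.

(* Take t = x g with x real, for a g making the linear coefficient real: x then
   solves a real quadratic whose constant term is negative. *)
Lemma isotropic_slope (a c d : C) :
  exists t, a * (1 - t * t^*) + t^* * c + t * d = 0.
Proof.
have [->|a0] := eqVneq a 0; first by exists 0; rewrite rmorph0 !(mul0r, mulr0, addr0).
have [g g0 yJ] := conj_real_direction (c * a^*) (d * a^*).
have aJ0 : a^* != 0 by rewrite conjC_eq0.
pose s := (g^* * (c * a^*) + g * (d * a^*)) / (a * a^*).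
have sJ : s^* = s.
  by rewrite /s fmorph_div /= yJ rmorphM /= conjCK [a^* * a]mulrC.
have gg_gt0 : 0 < g * g^* by rewrite mul_conjC_gt0.
have [x [xJ hx]] := real_quadratic_root gg_gt0 sJ.
exists (x * g); rewrite rmorphM /= xJ.
transitivity (- (g * g^* * x ^+ 2 - s * x - 1) * a).
  by rewrite /s; field; rewrite a0 aJ0.
by rewrite hx oppr0 mul0r.
Qed.

Definition qform2 (p q : C) (M : 'M[C]_2) :=
  p * p^* * M ord0 ord0 + p * q^* * M ord0 ord_max
  + q * p^* * M ord_max ord0 + q * q^* * M ord_max ord_max.

Lemma qform2_perp (p q : C) (M : 'M[C]_2) : p * p^* + q * q^* = 1 ->
  qform2 p q M + qform2 (- q^*) p^* M = \tr M.
Proof.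
move=> pq1; rewrite /mxtrace sum_ord2 -[RHS]mul1r -pq1 /qform2 rmorphN /= !conjCK.
ring.
Qed.

Lemma traceless_isotropic (M : 'M[C]_2) : \tr M = 0 ->
  exists p q, p * p^* + q * q^* = 1 /\ qform2 p q M = 0.
Proof.
rewrite /mxtrace sum_ord2 addrC => /eqP; rewrite addr_eq0 => /eqP M11.
have [t ht] := isotropic_slope (M ord0 ord0) (M ord0 ord_max) (M ord_max ord0).
have n_gt0 : 0 < 1 + t * t^* by rewrite ltr_wpDr // mul_conjC_ge0.
pose r := sqrtC (1 + t * t^*).
have r0 : r != 0 by rewrite sqrtC_eq0 gt_eqF.
have rJ : r^* = r by apply: geC0_conj; rewrite sqrtC_ge0 ltW.
exists r^-1, (t / r); rewrite /qform2 !rmorphM /= !fmorphV /= rJ; split.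
  transitivity ((1 + t * t^*) / r ^+ 2); first by field.
  by rewrite sqrtCK divff // gt_eqF.
transitivity ((M ord0 ord0 * (1 - t * t^*) + t^* * M ord0 ord_max
               + t * M ord_max ord0) / r ^+ 2); first by rewrite M11; field.
by rewrite ht mul0r.
Qed.

Definition ket0bra (p q : C) : 'M[C]_2 :=
  \matrix_(r, c) ((r == ord0)%:R * (if c == ord0 then p else q)^*).

Lemma ket0bra_complete (p q : C) : p * p^* + q * q^* = 1 ->
  (ket0bra p q)^t* *m ket0bra p q
  + (ket0bra (- q^*) p^*)^t* *m ket0bra (- q^*) p^* = 1%:M.
Proof.
move=> pq1; apply/matrixP => c c'; rewrite !mxE !sum_ord2 !mxE /=.
by case: (ord2P c) => ->; case: (ord2P c') => -> /=;
  rewrite !(mul1r, mul0r, addr0) ?rmorphN /= !conjCK -?pq1; ring.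
Qed.

Lemma dotq_ket0bra (Q : finType) (i : Q) (p q : C) (A B : qstate C Q) :
  dotq (apply1 i (ket0bra p q) A) (apply1 i (ket0bra p q) B)
  = qform2 p q (cross_mx i A B).
Proof.
rewrite dotq_apply1 dotq_apply1_cross /qform2 !sum_ord2 !mxE !sum_ord2 !mxE /=.
by rewrite !(mul1r, mul0r, addr0) !conjCK; ring.
Qed.

Lemma unitarymx_adjK n (u : 'M[C]_n) : u \is unitarymx -> u^t* *m u = 1%:M.
Proof. by rewrite -trmxC_unitary => /unitarymxP; rewrite trmxCK. Qed.

Lemma unitarymx_cols n (u : 'M[C]_n) : u \is unitarymx ->
  forall a b, \sum_l (u l a)^* * u l b = (a == b)%:R.
Proof.
move=> /unitarymx_adjK uu a b; have := congr1 (fun M : 'M[C]_n => M a b) uu.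
by rewrite !mxE => <-; apply: eq_bigr => l _; rewrite !mxE.
Qed.

Lemma proj_colE (u : 'M[C]_2) j : proj_col u j = u *m delta_mx j j *m u^t*.
Proof.
apply/matrixP => a b; rewrite !mxE (bigD1 j) //= big1 ?addr0 => [|l ne_lj].
  rewrite !mxE (bigD1 j) //= big1 ?addr0 => [|k ne_kj]; first by rewrite !mxE !eqxx mulr1.
  by rewrite mxE (negbTE ne_kj) mulr0.
rewrite mxE big1 ?mul0r // => k _.
by rewrite mxE (negbTE ne_lj) andbF mulr0.
Qed.

Section BlockCodes.
Variables N m : nat.
Implicit Types (F G : 'I_2 -> qstate C 'I_m) (u : 'M[C]_2).
Implicit Types (E : 'I_N -> 'I_2 -> qstate C 'I_m) (v : qstate C 'I_N).

(* [code_mul F u j] = sum_a u_aj F_a is the logical state u|j> in the code F. *)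
Definition code_mul F u (j : 'I_2) : qstate C 'I_m :=
  fun z => \sum_a u a j * F a z.

Definition orthogonal_pair F (lam : C) :=
  forall a b, dotq (F a) (F b) = lam * (a == b)%:R.

Lemma code_mul_mul F u u' : code_mul (code_mul F u) u' = code_mul F (u *m u').
Proof.
apply: functional_extensionality => j; apply: functional_extensionality => z.
rewrite /code_mul; under eq_bigr do rewrite mulr_sumr.
rewrite exchange_big; apply: eq_bigr => a _.
by rewrite mxE mulr_suml; apply: eq_bigr => l _; ring.
Qed.

Lemma code_mul1 F : code_mul F 1%:M = F.
Proof.
apply: functional_extensionality => j; apply: functional_extensionality => z.
by rewrite /code_mul; under eq_bigr do rewrite mxE mulrC eq_sym; rewrite sum_delta.
Qed.

Lemma code_mul_apply1 F u (i : 'I_m) (K : 'M[C]_2) j :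
  code_mul (fun a => apply1 i K (F a)) u j = apply1 i K (code_mul F u j).
Proof.
apply: functional_extensionality => z; rewrite /code_mul /apply1.
under eq_bigr do rewrite mulr_sumr.
rewrite exchange_big; apply: eq_bigr => b _.
by rewrite mulr_sumr; apply: eq_bigr => a _; ring.
Qed.

Lemma dotq_code_mul F u u' j j' :
  dotq (code_mul F u j) (code_mul F u' j')
  = \sum_a \sum_b (u a j)^* * u' b j' * dotq (F a) (F b).
Proof.
rewrite /dotq /code_mul; under eq_bigr do rewrite rmorph_sum mulr_suml.
rewrite exchange_big; apply: eq_bigr => a _.
under eq_bigr do rewrite mulr_sumr.
rewrite exchange_big; apply: eq_bigr => b _.
by rewrite mulr_sumr; apply: eq_bigr => z _; rewrite rmorphM; ring.
Qed.

Lemma orthogonal_pair_mul F u lam : u \is unitarymx ->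
  orthogonal_pair F lam -> orthogonal_pair (code_mul F u) lam.
Proof.
move=> u_unitary oF j j'; rewrite dotq_code_mul.
under eq_bigr do under eq_bigr do rewrite oF mulrA.
under eq_bigr do rewrite sum_delta.
by rewrite -(unitarymx_cols u_unitary) mulr_sumr; apply: eq_bigr => a _; ring.
Qed.

Definition encode_with E v : qstate C ('I_N * 'I_m)%type :=
  fun x => \sum_(c : config 'I_N) v c * \prod_(k < N) E k (c k) (block x k).

Definition set_block E (q : 'I_N) F : 'I_N -> 'I_2 -> qstate C 'I_m :=
  fun k => if k == q then F else E k.

Lemma set_block_eq E q F : set_block E q F q = F.
Proof. by rewrite /set_block eqxx. Qed.

Lemma set_block_set_block E q F G : set_block (set_block E q F) q G = set_block E q G.
Proof. by apply: functional_extensionality => k; rewrite /set_block; case: eqP. Qed.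

Lemma set_block_id E q : set_block E q (E q) = E.
Proof.
by apply: functional_extensionality => k; rewrite /set_block; case: eqP => // ->.
Qed.

Lemma block_upd (x : config ('I_N * 'I_m)%type) q i b k :
  block (upd x (q, i) b) k = if k == q then upd (block x q) i b else block x k.
Proof.
apply/ffunP => j; rewrite !ffunE xpair_eqE.
by case: (eqVneq k q) => [->|kq] /=; rewrite ?updE ?ffunE.
Qed.

Lemma apply1_encode_with q (i : 'I_m) (K : 'M[C]_2) E v :
  apply1 (q, i) K (encode_with E v)
  = encode_with (set_block E q (fun a => apply1 i K (E q a))) v.
Proof.
apply: functional_extensionality => x; rewrite /apply1 /encode_with.
under eq_bigr do rewrite mulr_sumr.
rewrite exchange_big; apply: eq_bigr => c _.
rewrite [in RHS](bigD1 q) //= set_block_eq mulr_suml mulr_sumr; apply: eq_bigr => b _.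
rewrite (bigD1 q) //= block_upd eqxx.
under eq_bigr => k ne_kq do rewrite block_upd (negbTE ne_kq).
under [in RHS]eq_bigr => k ne_kq do rewrite /set_block (negbTE ne_kq).
rewrite {2}/block ffunE; ring.
Qed.

Lemma encode_with_apply1 q (K : 'M[C]_2) E v :
  encode_with E (apply1 q K v) = encode_with (set_block E q (code_mul (E q) K)) v.
Proof.
apply: functional_extensionality => x; rewrite /encode_with /apply1.
pose G (c : config 'I_N) (r : 'I_2) :=
  K r (c q) * v c * \prod_(k < N) E k (upd c q r k) (block x k).
transitivity (\sum_c \sum_(b < 2) G (upd c q b) (c q)).
  apply: eq_bigr => c _; rewrite mulr_suml; apply: eq_bigr => b _.
  by rewrite /G upd_eq upd_upd upd_id.
rewrite sum_upd; apply: eq_bigr => c _.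
rewrite (bigD1 q) //= set_block_eq /code_mul mulr_suml mulr_sumr; apply: eq_bigr => r _.
rewrite /G (bigD1 q) //= upd_eq.
under eq_bigr => k ne_kq do rewrite updE (negbTE ne_kq).
under [in RHS]eq_bigr => k ne_kq do rewrite /set_block (negbTE ne_kq).
ring.
Qed.

Lemma nonzero_encode_with E v : nonzero (encode_with E v) -> nonzero v.
Proof.
case=> x; case: (pickP (fun c => v c != 0)) => [c vc _|v0]; first by exists c.
by rewrite /encode_with big1 ?eqxx // => c _; rewrite (eqP (negbFE (v0 c))) mul0r.
Qed.

End BlockCodes.

Definition locc_ensures (Q : finType) (P : qstate C Q -> Prop) (v : qstate C Q) :=
  exists t : ltree C Q, lbranches t v P.

Lemma locc_ensures_now (Q : finType) (P : qstate C Q -> Prop) v : P v -> locc_ensures P v.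
Proof. by exists (LLeaf C Q). Qed.

Lemma locc_ensures_instrument (Q : finType) (P : qstate C Q -> Prop) (q : Q) r
    (K : 'I_r -> 'M[C]_2) v :
  \sum_(j < r) (K j)^t* *m K j = 1%:M ->
  (forall j, locc_ensures P (apply1 q (K j) v)) -> locc_ensures P v.
Proof. by move=> K_complete /fin_all_exists [t ht]; exists (LOp q K t). Qed.

Section LocalDistinction.
Variables (N m : nat) (E : 'I_N -> 'I_2 -> qstate C 'I_m) (v : qstate C 'I_N).
Variables (q : 'I_N) (u : 'M[C]_2) (P : qstate C ('I_N * 'I_m)%type -> Prop).
Implicit Types (F : 'I_2 -> qstate C 'I_m).

Definition zero_prefix (n : nat) F :=
  forall a (z : config 'I_m) (i : 'I_m), (i < n)%N -> z i != ord0 -> F a z = 0.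

Let rotated_orth F := dotq (code_mul F u ord0) (code_mul F u ord_max) = 0.

Let reachable F := locc_ensures P (encode_with (set_block E q F) v).

Lemma zero_prefix_ket0bra n (lt_nm : (n < m)%N) F p r : zero_prefix n F ->
  zero_prefix n.+1 (fun a => apply1 (Ordinal lt_nm) (ket0bra p r) (F a)).
Proof.
move=> F0 a z i lt_in1 zi; apply: big1 => b _.
have [<- | ne_i] := eqVneq i (Ordinal lt_nm); first by rewrite mxE (negbTE zi) !mul0r.
have lt_in : (i < n)%N by rewrite ltn_neqAle -ltnS lt_in1 andbT; exact: ne_i.
by rewrite (F0 a _ i lt_in) ?mulr0 // updE (negbTE ne_i).
Qed.

(* The cross matrix of the rotated states on qubit n is traceless, so it has an
   isotropic unit vector w; then both outcomes of the instrument |0><w|, |0><w^perp|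
   keep the rotated states orthogonal. *)
Lemma walgate_step n F : (n < m)%N -> zero_prefix n F -> rotated_orth F ->
  (forall F', zero_prefix n.+1 F' -> rotated_orth F' -> reachable F') -> reachable F.
Proof.
move=> lt_nm F0 oF cont; pose i := Ordinal lt_nm.
pose M := cross_mx i (code_mul F u ord0) (code_mul F u ord_max).
have [p [r [pr1 Mpr]]] : exists p r, p * p^* + r * r^* = 1 /\ qform2 p r M = 0.
  by apply: traceless_isotropic; rewrite cross_mx_trace.
pose K (s : 'I_2) := if s == ord0 then ket0bra p r else ket0bra (- r^*) p^*.
rewrite /reachable; apply: (@locc_ensures_instrument _ _ (q, i) 2 K).
  by rewrite sum_ord2 ket0bra_complete.
move=> s; rewrite apply1_encode_with set_block_eq set_block_set_block.
apply: cont; first by rewrite /K; case: ifP => _; apply: zero_prefix_ket0bra.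
rewrite /rotated_orth !code_mul_apply1 /K; case: ifP => _; rewrite dotq_ket0bra -/M //.
by have := qform2_perp M pr1; rewrite Mpr add0r cross_mx_trace => ->.
Qed.

Lemma walgate F : rotated_orth F ->
  (forall F', zero_prefix m F' -> rotated_orth F' -> reachable F') -> reachable F.
Proof.
move=> oF cont.
suff: forall k n F, (n + k = m)%N -> zero_prefix n F -> rotated_orth F -> reachable F.
  by move=> /(_ m 0%N F (add0n m)); apply=> // a z i; rewrite ltn0.
elim=> [|k IHk] n G; first by rewrite addn0 => ->; exact: cont.
move=> nk G0 oG; have lt_nm : (n < m)%N by rewrite -nk addnS ltnS leq_addr.
apply: (walgate_step lt_nm) => // G' G'0 oG'.
by apply: (IHk n.+1) => //; rewrite addSnnS.
Qed.

Lemma zero_prefix_full F (z : config 'I_m) a :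
  zero_prefix m F -> z != [ffun => ord0] -> F a z = 0.
Proof.
move=> F0; case: (pickP (fun i => z i != ord0)) => [i zi _ | z0].
  exact: F0 (ltn_ord i) zi.
by case/negP; apply/eqP/ffunP => i; rewrite ffunE; apply/eqP/negbFE/z0.
Qed.

Lemma rotated_vanishes F : zero_prefix m F -> rotated_orth F ->
  exists j j' : 'I_2, j != j' /\ forall z, code_mul F u j' z = 0.
Proof.
move=> F0 oF; pose z0 : config 'I_m := [ffun => ord0]; pose G := code_mul F u.
have G0 l z : z != z0 -> G l z = 0.
  by move=> nz; apply: big1 => a _; rewrite (zero_prefix_full a F0 nz) mulr0.
have : (G ord0 z0)^* * G ord_max z0 = 0.
  move: oF; rewrite /rotated_orth -/G /dotq (bigD1 z0) //= big1 ?addr0 // => z nz.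
  by rewrite (G0 ord_max) ?mulr0.
move/eqP; rewrite mulf_eq0 conjC_eq0 => /orP[] /eqP G_z0;
  [exists ord_max, ord0 | exists ord0, ord_max]; split => // z;
  by have [-> | nz] := eqVneq z z0; [exact: G_z0 | exact: G0].
Qed.

(* Once both rotated states live on |0...0>, one of them vanishes: the other
   outcome j is that of the projective measurement, and the block is re-encoded
   in the fresh orthogonal pair |0...0>, |10...0> (rotated back by u^t* ). *)
Lemma collapse_code F : (0 < m)%N -> u \is unitarymx ->
  zero_prefix m F -> rotated_orth F ->
  exists j, exists2 F', (exists lam, orthogonal_pair F' lam)
                      & F = code_mul F' (proj_col u j).
Proof.
move=> m_gt0 u_unitary F0 oF; have [j [j' [ne_jj' Gj']]] := rotated_vanishes F0 oF.
pose z0 : config 'I_m := [ffun => ord0].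
pose z1 : config 'I_m := [ffun i => if val i == 0%N then ord_max else ord0].
have ne_z10 : z1 != z0 by apply/eqP => /ffunP /(_ (Ordinal m_gt0)); rewrite !ffunE.
pose g := code_mul F u j z0; pose zl (l : 'I_2) := if l == j then z0 else z1.
have zl_eq a b : (zl a == zl b) = (a == b).
  have ne_z01 : (z0 == z1) = false by rewrite eq_sym (negbTE ne_z10).
  rewrite /zl; by case: (ord2P a) (ord2P b) (ord2P j) => -> [] -> [] ->;
    rewrite /= ?eqxx ?ne_z01 ?(negbTE ne_z10).
pose H l z := g * (z == zl l)%:R.
exists j, (code_mul H (u^t*)).
  exists (g^* * g); apply: orthogonal_pair_mul; first by rewrite trmxC_unitary.
  move=> a b; rewrite -zl_eq -(sum_delta (zl a) (fun z => g^* * g * (z == zl b)%:R)).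
  by apply: eq_bigr => z _; rewrite /H rmorphM rmorph_nat eq_sym; ring.
rewrite code_mul_mul proj_colE !mulmxA unitarymx_adjK // mul1mx -code_mul_mul.
have -> : code_mul H (delta_mx j j) = code_mul F u.
  apply: functional_extensionality => l; apply: functional_extensionality => z.
  rewrite /code_mul (bigD1 j) //= big1 ?addr0 => [|a ne_aj]; last first.
    by rewrite mxE (negbTE ne_aj) mul0r.
  rewrite mxE eqxx /=; have [-> | ne_lj] := eqVneq l j.
    rewrite mulr1n mul1r /H /zl eqxx; have [-> | nz] := eqVneq z z0.
      by rewrite mulr1n mulr1.
    rewrite mulr0n mulr0 big1 // => a _.
    by rewrite (zero_prefix_full a F0 nz) mulr0.
  rewrite mulr0n mul0r; apply/esym; move: (Gj' z) ne_lj ne_jj'.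
  by case: (ord2P l) (ord2P j) (ord2P j') => -> [] -> [] ->.
by rewrite code_mul_mul (unitarymxP u_unitary) code_mul1.
Qed.

Lemma locc_measure_block lam : (0 < m)%N -> u \is unitarymx ->
  orthogonal_pair (E q) lam ->
  (forall j F, (exists lam', orthogonal_pair F lam') ->
     locc_ensures P (encode_with (set_block E q F) (apply1 q (proj_col u j) v))) ->
  locc_ensures P (encode_with E v).
Proof.
move=> m_gt0 u_unitary oEq cont; rewrite -(set_block_id E q).
apply: walgate => [|F F0 oF].
  by rewrite /rotated_orth (orthogonal_pair_mul u_unitary oEq) mulr0.
have [j [F' oF' ->]] := collapse_code m_gt0 u_unitary F0 oF.
by rewrite /reachable -(set_block_set_block E q F') -{2}(set_block_eq E q F')
  -encode_with_apply1; apply: cont.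
Qed.

End LocalDistinction.

Section Restriction.
Variables (Q Qt : finType) (f : Qt -> Q).
Hypothesis f_inj : injective f.

Definition restr (c : config Q) : config Qt := [ffun l => c (f l)].

Definition merge (d : config Qt) (c : config Q) : config Q :=
  [ffun k => if [pick l | f l == k] is Some l then d l else c k].

Lemma pick_f l : [pick l' | f l' == f l] = Some l.
Proof. by case: pickP => [l' /eqP/f_inj -> // | /(_ l)]; rewrite eqxx. Qed.

Lemma restr_merge d c : restr (merge d c) = d.
Proof. by apply/ffunP => l; rewrite !ffunE pick_f. Qed.

Lemma merge_restr c : merge (restr c) c = c.
Proof.
by apply/ffunP => k; rewrite !ffunE; case: pickP => [l /eqP <- | _]; rewrite ?ffunE.
Qed.

Lemma merge_merge d d' c : merge d (merge d' c) = merge d c.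
Proof. by apply/ffunP => k; rewrite !ffunE; case: pickP. Qed.

Lemma merge_out d c k : (forall l, f l != k) -> merge d c k = c k.
Proof. by move=> fk; rewrite ffunE; case: pickP => // l /eqP fl; case/eqP: (fk l). Qed.

Lemma sum_restr (A : config Q -> C) (B : config Qt -> C) :
  (forall d c, A (merge d c) = A c) ->
  \sum_c A c * B (restr c)
  = (\sum_(c | restr c == [ffun => ord0]) A c) * \sum_d B d.
Proof.
move=> A_merge; rewrite (partition_big restr predT) //= mulr_sumr.
apply: eq_bigr => d _.
rewrite (eq_bigr (fun c => A c * B d)) => [|c /eqP -> //].
rewrite -big_distrl (reindex_onto (merge d) (merge [ffun => ord0])) /=; last first.
  by move=> c /eqP <-; rewrite merge_merge merge_restr.
congr (_ * _); apply: eq_big => [c | c _]; last exact: A_merge.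
rewrite restr_merge eqxx merge_merge /=.
by apply/eqP/eqP => [<- | <-]; rewrite ?restr_merge ?merge_restr.
Qed.

End Restriction.

Lemma holds_on_encode_with (N m n : nat) (f : 'I_n -> 'I_N) (e : 'I_2 -> qstate C 'I_m)
    (E : 'I_N -> 'I_2 -> qstate C 'I_m) (v : qstate C 'I_N) (w : qstate C 'I_n) :
  injective f -> (forall l, E (f l) = e) -> holds_on f v w ->
  holds_on (fun p : 'I_n * 'I_m => (f p.1, p.2)) (encode_with E v) (encode e w).
Proof.
move=> f_inj Ef [chi [chi_out vE]].
pose img := f @: [set: 'I_n].
have not_img k : k \notin img -> forall l, f l != k.
  by move=> k_img l; apply: contraNneq k_img => <-; rewrite imset_f.
pose H x (c : config 'I_N) := \prod_(k < N | k \notin img) E k (c k) (block x k).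
exists (fun x => \sum_(c | restr f c == [ffun => ord0]) chi c * H x c); split.
  move=> x x' xx'; apply: eq_bigr => c _; congr (_ * _); apply: eq_bigr => k k_img.
  congr (E k _ _); apply/ffunP => j; rewrite !ffunE; apply: xx' => -[l j'] /=.
  by rewrite xpair_eqE negb_and not_img.
move=> x; pose y : config ('I_n * 'I_m)%type := [ffun p => x (f p.1, p.2)].
rewrite /encode_with /encode.
have split_img c : v c * \prod_k E k (c k) (block x k)
    = (chi c * H x c) * (w (restr f c) * \prod_l e (restr f c l) (block y l)).
  rewrite vE (bigID (fun k => k \in img)) /= (big_imset _ (in2W f_inj)) /=.
  have -> : \prod_(l in [set: 'I_n]) E (f l) (c (f l)) (block x (f l))
            = \prod_l e (restr f c l) (block y l).
    apply: eq_big => [l | l _]; first by rewrite inE.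
    by rewrite Ef ffunE; congr (e _ _); apply/ffunP => j; rewrite !ffunE.
  rewrite /H; ring.
under eq_bigr do rewrite split_img.
rewrite (@sum_restr _ _ _ f_inj (fun c => chi c * H x c)
           (fun d => w d * \prod_l e (d l) (block y l))) // => d c.
congr (_ * _); first by apply: chi_out => k fk; rewrite merge_out.
by apply: eq_bigr => k k_img; rewrite merge_out //; apply: not_img.
Qed.

Lemma sum_blocks (n m : nat) (G : 'I_n -> config 'I_m -> C) :
  \sum_(y : config ('I_n * 'I_m)%type) \prod_(k < n) G k (block y k)
  = \prod_(k < n) \sum_(z : config 'I_m) G k z.
Proof.
rewrite bigA_distr_bigA /=.
rewrite (reindex (fun F : {ffun 'I_n -> config 'I_m} =>
            [ffun p : 'I_n * 'I_m => F p.1 p.2] : config ('I_n * 'I_m)%type)).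
  apply: eq_bigr => F _; apply: eq_bigr => k _; congr (G k _).
  by apply/ffunP => j; rewrite !ffunE.
exists (fun y : config ('I_n * 'I_m)%type => [ffun k => block y k]) => [F _ | y _].
  by apply/ffunP => k; apply/ffunP => j; rewrite !ffunE.
by apply/ffunP => -[k j]; rewrite !ffunE.
Qed.

Lemma logical_op_ket (m : nat) (e : 'I_2 -> qstate C 'I_m) (u : 'M[C]_2) c z :
  orthonormal_pair e ->
  \sum_z' logical_op e u z z' * e c z' = \sum_a u a c * e a z.
Proof.
move=> oe; rewrite /logical_op.
under eq_bigr do rewrite mulr_suml; rewrite exchange_big; apply: eq_bigr => a _.
under eq_bigr do rewrite mulr_suml; rewrite exchange_big /=.
rewrite -(sum_delta c (fun b => u a b * e a z)) /=; apply: eq_bigr => b _.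
by rewrite eq_sym -oe mulr_sumr; apply: eq_bigr => z' _; ring.
Qed.

Lemma encode_tensor_apply (m n : nat) (e : 'I_2 -> qstate C 'I_m)
    (U : 'I_n -> 'M[C]_2) (phi : qstate C 'I_n) :
  orthonormal_pair e ->
  encode e (tensor_apply U phi) = logical_apply e U (encode e phi).
Proof.
move=> oe; apply: functional_extensionality => y.
pose T c' := \prod_(k < n) \sum_(a < 2) U k a (c' k) * e a (block y k).
transitivity (\sum_c' phi c' * T c').
  rewrite /encode /tensor_apply; under eq_bigr do rewrite mulr_suml.
  rewrite exchange_big; apply: eq_bigr => c' _.
  rewrite /T bigA_distr_bigA mulr_sumr; apply: eq_bigr => c _.
  by rewrite big_split /=; ring.
rewrite /logical_apply /encode; under [RHS]eq_bigr do rewrite mulr_sumr.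
rewrite [RHS]exchange_big; apply: eq_bigr => c' _.
transitivity (phi c' * \sum_(y' : config ('I_n * 'I_m)%type) \prod_(k < n)
   (logical_op e (U k) (block y k) (block y' k) * e (c' k) (block y' k))).
  rewrite (sum_blocks (fun k z => logical_op e (U k) (block y k) z * e (c' k) z)).
  by congr (_ * _); apply: eq_bigr => k _; rewrite logical_op_ket.
by rewrite mulr_sumr; apply: eq_bigr => y' _; rewrite big_split /=; ring.
Qed.

Lemma orthonormal_pair_gt0 (m : nat) (e : 'I_2 -> qstate C 'I_m) :
  orthonormal_pair e -> (0 < m)%N.
Proof.
case: m e => // e oe; pose z0 : config 'I_0 := [ffun i => ord0].
have sum1 (F : config 'I_0 -> C) : \sum_z F z = F z0.
  by rewrite (big_pred1 z0) // => z; apply/esym/eqP/ffunP => -[].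
have := oe ord_max ord_max; have := oe ord0 ord_max; rewrite !sum1 !eqxx /=.
move/eqP; rewrite mulf_eq0 conjC_eq0 => /orP[/eqP e00 | /eqP -> ]; last first.
  by rewrite mulr0 => /eqP; rewrite eq_sym oner_eq0.
move: (oe ord0 ord0); rewrite sum1 e00 rmorph0 mul0r eqxx => /eqP.
by rewrite eq_sym oner_eq0.
Qed.

Section MeasurementSimulation.
Variables (N m n : nat) (f : 'I_n -> 'I_N) (e : 'I_2 -> qstate C 'I_m).
Variable phi : qstate C 'I_n.
Hypotheses (f_inj : injective f) (oe : orthonormal_pair e).

Let proj_goal (w : qstate C 'I_N) (meas : seq 'I_N) :=
  (forall q, q \in meas -> forall k, f k != q) /\
  (forall q, (forall k, f k != q) -> q \in meas) /\
  (nonzero w -> exists U : 'I_n -> 'M[C]_2,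
     (forall k, U k \is unitarymx) /\ holds_on f w (tensor_apply U phi)).

Let locc_goal (V : qstate C ('I_N * 'I_m)%type) :=
  nonzero V -> exists U : 'I_n -> 'M[C]_2,
    (forall k, U k \is unitarymx) /\
    holds_on (fun p : 'I_n * 'I_m => (f p.1, p.2)) V (logical_apply e U (encode e phi)).

Lemma simulate_measurements (t : ptree C 'I_N) w meas E :
  (forall k, exists lam, orthogonal_pair (E k) lam) ->
  (forall k, k \notin meas -> E k = e) ->
  pbranches t w meas proj_goal -> locc_ensures locc_goal (encode_with E w).
Proof.
elim: t w meas E => [|q u ch IH] w meas E oE Ee /=.
  move=> [meas_out [_ goal]]; apply: locc_ensures_now.
  move=> /nonzero_encode_with /goal [U [U_unitary hw]]; exists U; split => //.
  rewrite -encode_tensor_apply //; apply: holds_on_encode_with => // l.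
  by apply: Ee; apply/negP => /meas_out /(_ l); rewrite eqxx.
move=> [u_unitary ch_ok]; have [lam oEq] := oE q.
apply: (locc_measure_block (orthonormal_pair_gt0 oe) u_unitary oEq) => j F oF.
apply: (IH j _ (q :: meas) _ _ _ (ch_ok j)) => k; first by rewrite /set_block; case: eqP.
by rewrite inE negb_or => /andP[ne_kq k_meas]; rewrite /set_block (negbTE ne_kq) Ee.
Qed.

End MeasurementSimulation.

End Simulation.

Theorem theorem16 (R : realType) (I : Type) (N : I -> nat)
    (psi : forall i : I, qstate R[i] 'I_(N i)) :
  (forall i, normalized (psi i)) ->
  universal_proj psi ->
  forall (m : nat) (e : 'I_2 -> qstate R[i] 'I_m),
    orthonormal_pair e ->
    enc_universal_locc e psi.
Proof.
move=> _ psi_universal m e oe n phi phi_normalized.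
have [i [f [f_inj [t ht]]]] := psi_universal n phi phi_normalized.
exists i, f; split => //.
have oE (k : 'I_(N i)) : exists lam, orthogonal_pair e lam.
  by exists 1 => a b; rewrite mul1r; apply: oe.
exact: (simulate_measurements f_inj oe oE (fun _ _ => erefl) ht).
Qed.
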